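(* Let $k$ be odd, $n=4k$, $d=\frac{(3^{2k}+1)^2}{20}$, let $a\in\mathrm{GF}(3^n)^*$ be nonzero, and let $r$ be a nonsquare in $\mathrm{GF}(3^4)^*$. Then the equation $$(ar)^{3^{2(k+1)}}y^{81}-(r^{d}+r^{9d})y^9+ary=0$$ has $y=0$ as its only solution in $\mathrm{GF}(3^n)$.
   Context: $\mathrm{GF}(3^4)$ is regarded as a subfield of $\mathrm{GF}(3^n)$ (since $4\mid n$). *)

From HB Require Import structures.
From mathcomp Require Import all_boot all_order all_algebra all_field.
Set Implicit Arguments. Unset Strict Implicit. Unset Printing Implicit Defensive.

(* d = (3^(2k) + 1)^2 / 20 ; exact division when k is odd. *)
Definition dexp (k : nat) : nat := ((3 ^ (2 * k) + 1) ^ 2 %/ 20)%N.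

(* GF(3^4) viewed as the subfield {x | x^(3^4) = x} of F. *)
Definition inGF81 (F : finFieldType) (x : F) : Prop := (x ^+ (3 ^ 4) = x)%R.

Definition nonsquare_GF81 (F : finFieldType) (r : F) : Prop :=
  inGF81 r /\ r != 0%R /\ ~ (exists s : F, inGF81 s /\ (s ^+ 2 = r)%R).

From HB Require Import structures.
From mathcomp Require Import all_boot all_order all_algebra all_field.
From mathcomp Require Import all_solvable zify ring.
Set Implicit Arguments. Unset Strict Implicit. Unset Printing Implicit Defensive.
Import GRing.Theory.
Local Open Scope ring_scope.

(* Let F = GF(3^(4k)) with k odd, so that #|F| - 1 = 81^k - 1 = 80 e with e
   odd, and put A = a r.  The proof has three ingredients.
   1. Euler's criterion in F: an element r with r^80 = 1 is a square of an
      element s with s^80 = 1 (hence of GF(81)) iff r^40 = 1; so the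
      nonsquare r of GF(81) satisfies r^40 = -1.
   2. Arithmetic: for odd k, d = 5 mod 80 and 3^(2(k+1)) = 1 + 80 v; hence
      r^d = r^5, r^(9d) = r^45 = -r^5, the middle coefficient vanishes and
      the equation reads  A y ((A^v y)^80 + 1) = 0.
   3. Since (#|F| - 1)/80 = e is odd, -1 is not an 80-th power in F
      (otherwise 1 = x^(#|F|-1) = (-1)^e = -1, impossible in characteristic 3).
   Hence A^v y = 0, i.e. y = 0. *)

Section FiniteFieldPowers.

Variable F : finFieldType.

Lemma expf_card_pred (x : F) : x != 0 -> x ^+ #|F|.-1 = 1.
Proof.
move=> x0; apply: (mulfI x0); rewrite mulr1 -exprS prednK ?expf_card //.
exact: ltn_trans (finNzRing_gt1 F).
Qed.

Lemma finField_prim_root : exists w : F, (#|F|.-1).-primitive_root w.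
Proof.
have n_gt0 : (0 < #|F|.-1)%N by rewrite ltn_predRL finNzRing_gt1.
have : has (#|F|.-1).-primitive_root (enum (predC1 (0 : F))).
  apply: has_prim_root => //; last by rewrite -cardE cardC1.
  - apply/allP => x; rewrite mem_enum /= unity_rootE => x0.
    by rewrite expf_card_pred.
  - exact: enum_uniq.
by case/hasP => w _; exists w.
Qed.

Lemma square_of_unity_root n (r : F) :
  (0 < n)%N -> (n.*2 %| #|F|.-1)%N -> r ^+ n = 1 ->
  exists s : F, s ^+ n.*2 = 1 /\ s ^+ 2 = r.
Proof.
move=> n_gt0 /dvdnP [e cardF] rn.
have [w w_prim] := finField_prim_root.
have r0 : r != 0.
  by apply: contraPneq rn => ->; rewrite expr0n gtn_eqF // => /eqP; rewrite eq_sym oner_eq0.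
have [[i _] /= ri] := prim_rootP w_prim (expf_card_pred r0).
have /dvdnP [j ij] : (2 * e %| i)%N.
  rewrite -(dvdn_pmul2l n_gt0) (_ : (n * (2 * e) = #|F|.-1)%N); last by rewrite cardF; lia.
  by rewrite (prim_order_dvd w_prim) mulnC exprM -ri rn.
exists (w ^+ (j * e)); rewrite -!exprM; split.
  have -> : (j * e * n.*2 = #|F|.-1 * j)%N by rewrite cardF; lia.
  by rewrite exprM (prim_expr_order w_prim) expr1n.
by rewrite ri ij; congr (w ^+ _); lia.
Qed.

Lemma neg1_not_power n e (x : F) :
  #|F|.-1 = (n * e)%N -> odd e -> (-1 : F) != 1 -> x ^+ n != -1.
Proof.
move=> cardF odd_e neg1; apply/eqP => xn.
have x0 : x != 0.
  apply: contraPneq xn => ->; case: n {cardF} => [|n]; first by apply/eqP; rewrite eq_sym.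
  by rewrite exprS mul0r => /esym/eqP; rewrite oppr_eq0 oner_eq0.
have := expf_card_pred x0.
by rewrite cardF exprM xn -signr_odd odd_e expr1 => /eqP; rewrite (negbTE neg1).
Qed.
End FiniteFieldPowers.

Lemma nonsquare_GF81_pow40 (F : finFieldType) (r : F) :
  (80 %| #|F|.-1)%N -> nonsquare_GF81 r -> r ^+ 40 = -1.
Proof.
move=> dvd80 [r81 [r0 not_square]].
have r80 : (r ^+ 40) ^+ 2 = 1 by apply: (mulfI r0); rewrite -exprM mulr1 -exprS r81.
move/eqP: r80; rewrite sqrf_eq1 => /orP [/eqP r40 | /eqP //].
have [s [s80 s2]] := square_of_unity_root (isT : (0 < 40)%N) dvd80 r40.
by case: not_square; exists s; split => //; rewrite /inGF81 exprS s80 mulr1.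
Qed.

Lemma pow81_mod80 m : exists2 u, (81 ^ m = 1 + 80 * u)%N & odd u = odd m.
Proof.
elim: m => [|m [u Hu odd_u]]; first by exists 0%N.
exists (1 + 81 * u)%N; first by rewrite expnS Hu; lia.
by rewrite oddD oddM odd_u.
Qed.

(* For odd k, 3^(2k) = 9 * 81^((k-1)/2) is 9 mod 720. *)
Lemma pow9_odd_mod720 k : odd k -> exists u, (3 ^ (2 * k) = 9 + 720 * u)%N.
Proof.
move=> odd_k; have [u Hu _] := pow81_mod80 k./2; exists u.
have -> : (2 * k = 2 + 4 * k./2)%N by rewrite -[k in LHS]odd_double_half odd_k; lia.
by rewrite expnD expnM Hu; lia.
Qed.

Lemma dexp_mod80 k : odd k -> (dexp k %% 80 = 5)%N.
Proof.
move=> /pow9_odd_mod720 [u Hu]; rewrite /dexp Hu.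
have -> : ((9 + 720 * u + 1) ^ 2 = 20 * (5 + 80 * (9 * u + 324 * u ^ 2)))%N by lia.
by rewrite mulKn //; lia.
Qed.

Theorem lemma4 (F : finFieldType) (k : nat) (a r : F) :
  odd k -> #|F| = (3 ^ (4 * k))%N ->
  a != 0 -> nonsquare_GF81 r ->
  forall y : F,
    (a * r) ^+ (3 ^ (2 * k.+1)) * y ^+ 81
      - (r ^+ dexp k + r ^+ (9 * dexp k)) * y ^+ 9 + a * r * y = 0 ->
    y = 0.
Proof.
move=> odd_k cardF a0 nsq_r y Hy; case: (nsq_r) => _ [r0 _].
have [e card81] := pow81_mod80 k; rewrite odd_k => odd_e.
have cardF1 : #|F|.-1 = (80 * e)%N by rewrite cardF expnM card81.
have neg1 : (-1 : F) != 1.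
  have pchar3 : 3 \in [pchar F] := card_finPcharP cardF (isT : prime 3).
  by rewrite -subr_eq0 -opprD oppr_eq0 -(natrD F 1 1) -(dvdn_pcharf pchar3).
have r40 : r ^+ 40 = -1 by apply: nonsquare_GF81_pow40 nsq_r; rewrite cardF1 dvdn_mulr.
have r80 : r ^+ 80 = 1 by rewrite (exprM r 40 2) r40 sqrrN expr1n.
have rd : r ^+ dexp k = r ^+ 5 by rewrite -(expr_mod _ r80) (dexp_mod80 odd_k).
have r9d : r ^+ (9 * dexp k) = - r ^+ 5.
  rewrite -(expr_mod _ r80) -modnMmr (dexp_mod80 odd_k).
  change (r ^+ (5 + 40) = - r ^+ 5). (* 9 * 5 = 45 mod 80 *)
  by rewrite exprD r40 mulrN1.
have [u pow9] := pow9_odd_mod720 odd_k.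
have pow9k1 : (3 ^ (2 * k.+1) = 1 + 80 * (1 + 81 * u))%N by rewrite mulnS expnD pow9; lia.
rewrite rd r9d subrr mul0r subr0 pow9k1 in Hy.
set A := a * r in Hy; set v := (1 + 81 * u)%N in Hy.
have : A * y * ((A ^+ v * y) ^+ 80 + 1) = 0.
  by rewrite -[RHS]Hy exprMn -exprM exprD expr1 (mulnC 80) (exprS y 80); ring.
have A0 : A != 0 by rewrite mulf_neq0.
move/eqP; rewrite mulf_eq0 addr_eq0 (negbTE (neg1_not_power _ cardF1 odd_e neg1)) orbF.
by rewrite mulf_eq0 (negbTE A0) => /eqP.
Qed.
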